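(* Let $M_1,M_2\in\mathcal{G}$ be such that $C_{M_1}$, $C_{M_2}$ and $C_{M_2^{-1}}$ are invertible. Then $$C_{M_1}^{-1}C_{M_1M_2}C_{M_2}^{-1}=\mathbb{1}-Z_{M_1}Z_{M_2^{-1}}.$$
   Context: Bosonic case: $\mathcal{G}=\mathrm{Sp}(2N,\mathbb{R})$, $J$ a complex structure compatible with the standard symplectic form ($J^2=-\mathbb{1}$, $J\Omega J^\intercal=\Omega$, $-J\Omega>0$). Fermionic case: $\mathcal{G}=\mathrm{SO}(2N,\mathbb{R})$, $J$ orthogonal with $J^2=-\mathbb{1}$. For $M\in\mathcal{G}$: $C_M=\frac12(M-JMJ)$, $D_M=\frac12(M+JMJ)$, $Z_M=C_M^{-1}D_M$. *)

From HB Require Import structures.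
From mathcomp Require Import all_boot all_order all_algebra.
From mathcomp Require Import reals.
Set Implicit Arguments. Unset Strict Implicit. Unset Printing Implicit Defensive.
Import Order.TTheory GRing.Theory Num.Theory.
Local Open Scope ring_scope.

Definition Omega (R : realType) (N : nat) : 'M[R]_(N + N) :=
  block_mx 0 1%:M (- 1%:M) 0.

Definition posdef (R : realType) (n : nat) (A : 'M[R]_n) : Prop :=
  A^T = A /\ forall x : 'cV[R]_n, x != 0 -> 0 < (x^T *m A *m x) 0 0.

Inductive case := Bosonic | Fermionic.

(* Membership in G: Sp(2N,R) in the bosonic case, SO(2N,R) in the fermionic case. *)
Definition in_group (R : realType) (N : nat) (c : case) (M : 'M[R]_(N + N)) : Prop :=
  match c with
  | Bosonic => M^T *m Omega R N *m M = Omega R N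
  | Fermionic => M^T *m M = 1%:M /\ \det M = 1
  end.

Definition compatible_J (R : realType) (N : nat) (c : case) (J : 'M[R]_(N + N)) : Prop :=
  match c with
  | Bosonic => J *m J = - 1%:M /\ J *m Omega R N *m J^T = Omega R N
               /\ posdef (- (J *m Omega R N))
  | Fermionic => J^T *m J = 1%:M /\ J *m J = - 1%:M
  end.

Definition Cmat (R : realType) (N : nat) (J M : 'M[R]_(N + N)) : 'M[R]_(N + N) :=
  2^-1 *: (M - J *m M *m J).
Definition Dmat (R : realType) (N : nat) (J M : 'M[R]_(N + N)) : 'M[R]_(N + N) :=
  2^-1 *: (M + J *m M *m J).
Definition Zmat (R : realType) (N : nat) (J M : 'M[R]_(N + N)) : 'M[R]_(N + N) :=
  invmx (Cmat J M) *m Dmat J M.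

From HB Require Import structures.
From mathcomp Require Import all_boot all_order all_algebra.
From mathcomp Require Import reals.
Import Order.TTheory GRing.Theory Num.Theory.
Local Open Scope ring_scope.

(* C_M and D_M are the parts of M commuting and anticommuting with J, so
   C_(AB) = C_A C_B + D_A D_B and D_(AB) = C_A D_B + D_A C_B.  Applied to
   M2^-1 M2 = 1, where D_1 = 0, the second identity gives
   D_(M2) C_(M2)^-1 = - Z_(M2^-1); the first one expands
   C_(M1)^-1 C_(M1 M2) C_(M2)^-1 into 1 + Z_(M1) D_(M2) C_(M2)^-1. *)

Lemma mulmxBB_DD (R : pzRingType) m n p (a b : 'M[R]_(m, n)) (c d : 'M[R]_(n, p)) :
  (a - b) *m (c - d) + (a + b) *m (c + d) = (a *m c + b *m d) *+ 2.
Proof.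
rewrite mulmxBl mulmxDl !mulmxBr !mulmxDr opprB [b *m d - _]addrC.
rewrite addrACA [X in X + _]addrACA [X in _ + X]addrACA.
by rewrite !addNr addr0 add0r mulr2n addrACA.
Qed.

Lemma mulmxBD_DB (R : pzRingType) m n p (a b : 'M[R]_(m, n)) (c d : 'M[R]_(n, p)) :
  (a - b) *m (c + d) + (a + b) *m (c - d) = (a *m c - b *m d) *+ 2.
Proof.
rewrite mulmxBl mulmxDl !mulmxBr !mulmxDr opprD.
rewrite addrACA [X in X + _]addrACA [X in _ + X]addrACA.
by rewrite subrr addNr addr0 add0r mulr2n addrACA.
Qed.

Lemma scale_halfV_mulr2n (R : numFieldType) (V : lmodType R) (x : V) :
  (2^-1 * 2^-1) *: (x *+ 2) = 2^-1 *: x.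
Proof. by rewrite -scaler_nat scalerA -mulrA mulVf ?mulr1 ?pnatr_eq0. Qed.

Lemma Omega_mulmx_Omega (R : realType) (N : nat) :
  Omega R N *m Omega R N = - 1%:M.
Proof.
rewrite /Omega mulmx_block !mul0mx !mulmx0 !add0r !addr0 mul1mx mulmx1.
by rewrite -!raddfN -scalar_mx_block.
Qed.

Lemma in_group_unitmx (R : realType) (N : nat) (c : case) (M : 'M[R]_(N + N)) :
  in_group c M -> M \in unitmx.
Proof.
case: c => /= [symM | [orthM _]]; last by case: (mulmx1_unit orthM).
have invM : - (Omega R N *m M^T *m Omega R N) *m M = 1%:M.
  by rewrite mulNmx -!mulmxA (mulmxA M^T) symM Omega_mulmx_Omega opprK.
by case: (mulmx1_unit invM).
Qed.

Lemma compatible_J_sqr (R : realType) (N : nat) (c : case) (J : 'M[R]_(N + N)) :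
  compatible_J c J -> J *m J = - 1%:M.
Proof. by case: c => [[]|[]]. Qed.

Section CmatDmat.

Variables (R : realType) (N : nat) (J : 'M[R]_(N + N)).
Hypothesis JJ : J *m J = - 1%:M.

Lemma mulmx_conjJ (A B : 'M[R]_(N + N)) :
  J *m A *m J *m (J *m B *m J) = - (J *m (A *m B) *m J).
Proof. by rewrite !mulmxA -(mulmxA _ J J) JJ mulmxN mulmx1 !mulNmx. Qed.

Lemma Cmat_mul (A B : 'M[R]_(N + N)) :
  Cmat J (A *m B) = Cmat J A *m Cmat J B + Dmat J A *m Dmat J B.
Proof.
rewrite /Cmat /Dmat -!scalemxAl -!scalemxAr !scalerA -scalerDr.
by rewrite mulmxBB_DD mulmx_conjJ scale_halfV_mulr2n.
Qed.

Lemma Dmat_mul (A B : 'M[R]_(N + N)) :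
  Dmat J (A *m B) = Cmat J A *m Dmat J B + Dmat J A *m Cmat J B.
Proof.
rewrite /Cmat /Dmat -!scalemxAl -!scalemxAr !scalerA -scalerDr.
by rewrite mulmxBD_DB mulmx_conjJ opprK scale_halfV_mulr2n.
Qed.

Lemma Dmat1 : Dmat J 1%:M = 0.
Proof. by rewrite /Dmat mulmx1 JJ subrr scaler0. Qed.

Lemma Dmat_mulmx_invCmat (M : 'M[R]_(N + N)) :
  M \in unitmx -> Cmat J M \in unitmx -> Cmat J (invmx M) \in unitmx ->
  Dmat J M *m invmx (Cmat J M) = - Zmat J (invmx M).
Proof.
move=> uM uC uCV.
have : Cmat J (invmx M) *m Dmat J M + Dmat J (invmx M) *m Cmat J M = 0.
  by rewrite -Dmat_mul mulVmx // Dmat1.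
move/eqP; rewrite addr_eq0 => /eqP CVD.
rewrite /Zmat -[Dmat J M](mulKmx uCV) CVD mulmxN mulNmx -!mulmxA mulmxV //.
by rewrite mulmx1.
Qed.

End CmatDmat.

Theorem proposition1 (R : realType) (N : nat) (c : case) (J M1 M2 : 'M[R]_(N + N)) :
  compatible_J c J -> in_group c M1 -> in_group c M2 ->
  Cmat J M1 \in unitmx -> Cmat J M2 \in unitmx -> Cmat J (invmx M2) \in unitmx ->
  invmx (Cmat J M1) *m Cmat J (M1 *m M2) *m invmx (Cmat J M2)
  = 1%:M - Zmat J M1 *m Zmat J (invmx M2).
Proof.
move=> /compatible_J_sqr JJ _ /in_group_unitmx uM2 uC1 uC2 uCV2.
rewrite Cmat_mul // mulmxDr mulmxDl !mulmxA mulVmx // mul1mx mulmxV //.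
rewrite -(mulmxA _ (Dmat J M2)) Dmat_mulmx_invCmat // mulmxN /Zmat.
by rewrite !mulmxA.
Qed.
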